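(* Let $k$ be a field of characteristic zero, $n\ge1$, $S=k[x_1,\ldots,x_n]$, and $(S,L)$ a triangularizable Lie–Rinehart algebra with basis $\alpha_1,\ldots,\alpha_n$ and enveloping algebra $U$. The restriction of $d^0:U\to\mathcal{X}^1$, $d^0(u)=\sum_{k=1}^n[u,x_k]\hat x_k$, to $F_1U=S\oplus\bigoplus_{i=1}^nS\alpha_i$ has kernel $F_0U=S$.
   Context: Triangularizable: $L\subseteq\operatorname{Der}(S)$ an $S$-submodule and Lie subalgebra, free with basis of derivations $\alpha_1,\ldots,\alpha_n$ such that $\alpha_i(x_j)=0$ for $i>j$ and $\alpha_1(x_1)\cdots\alpha_n(x_n)\neq0$. $U$ is the universal enveloping algebra of $(S,L)$, with $[\alpha,s]=\alpha(s)$. $\mathcal{X}^1=U\otimes_k W^*$ where $W=\operatorname{span}_k(x_1,\ldots,x_n)$ and $\hat x_1,\ldots,\hat x_n$ is the dual basis. $F_pU$ is the $S$-span of the monomials $\alpha_n^{i_n}\cdots\alpha_1^{i_1}$ with $i_1+\cdots+i_n\le p$. *)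

From HB Require Import structures.
From mathcomp Require Import all_boot all_order all_algebra.
From mathcomp Require Import multinomials.mpoly.
Set Implicit Arguments. Unset Strict Implicit. Unset Printing Implicit Defensive.
Import GRing.Theory.
Local Open Scope ring_scope.

(* S = k[x_1,...,x_n] is {mpoly k[n]}; variable x_(i+1) is 'X_i, i : 'I_n. *)

Definition isDer (k : fieldType) (n : nat) (D : {mpoly k[n]} -> {mpoly k[n]}) : Prop :=
  [/\ forall p q, D (p + q) = D p + D q,
      forall (c : k) p, D (c *: p) = c *: D p
    & forall p q, D (p * q) = p * D q + D p * q].

Definition inL (k : fieldType) (n : nat) (alpha : 'I_n -> {mpoly k[n]} -> {mpoly k[n]})
  (D : {mpoly k[n]} -> {mpoly k[n]}) : Prop :=
  exists c : 'I_n -> {mpoly k[n]}, forall p, D p = \sum_(i < n) c i * alpha i p.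

Definition triangularizable (k : fieldType) (n : nat)
  (alpha : 'I_n -> {mpoly k[n]} -> {mpoly k[n]}) : Prop :=
  [/\ forall i, isDer (alpha i),
      forall c : 'I_n -> {mpoly k[n]},
        (forall p, \sum_(i < n) c i * alpha i p = 0) -> forall i, c i = 0,
      forall D E, inL alpha D -> inL alpha E -> inL alpha (fun p => D (E p) - E (D p)),
      forall i j : 'I_n, (j < i)%N -> alpha i 'X_j = 0
    & \prod_(i < n) alpha i 'X_i != 0].

Definition LR_compatible (k : fieldType) (n : nat)
  (alpha : 'I_n -> {mpoly k[n]} -> {mpoly k[n]}) (A : pzRingType)
  (phi : {rmorphism {mpoly k[n]} -> A}) (psi : ({mpoly k[n]} -> {mpoly k[n]}) -> A) : Prop :=
  [/\ forall D E, inL alpha D -> inL alpha E ->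
        psi (fun p => D p + E p) = psi D + psi E,
      forall s D, inL alpha D -> psi (fun p => s * D p) = phi s * psi D,
      forall D E, inL alpha D -> inL alpha E ->
        psi (fun p => D (E p) - E (D p)) = psi D * psi E - psi E * psi D
    & forall D s, inL alpha D -> psi D * phi s - phi s * psi D = phi (D s)].

Definition is_enveloping (k : fieldType) (n : nat)
  (alpha : 'I_n -> {mpoly k[n]} -> {mpoly k[n]}) (U : pzRingType)
  (iota : {rmorphism {mpoly k[n]} -> U}) (j : ({mpoly k[n]} -> {mpoly k[n]}) -> U) : Prop :=
  LR_compatible alpha iota j /\
  forall (A : pzRingType) (phi : {rmorphism {mpoly k[n]} -> A})
         (psi : ({mpoly k[n]} -> {mpoly k[n]}) -> A),
    LR_compatible alpha phi psi ->
    exists f : {rmorphism U -> A},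
      [/\ forall s, f (iota s) = phi s,
          forall D, inL alpha D -> f (j D) = psi D
        & forall g : {rmorphism U -> A},
            (forall s, g (iota s) = phi s) ->
            (forall D, inL alpha D -> g (j D) = psi D) -> forall u, g u = f u].

Definition F1U (k : fieldType) (n : nat) (alpha : 'I_n -> {mpoly k[n]} -> {mpoly k[n]})
  (U : pzRingType) (iota : {rmorphism {mpoly k[n]} -> U})
  (j : ({mpoly k[n]} -> {mpoly k[n]}) -> U) (u : U) : Prop :=
  exists (s : {mpoly k[n]}) (c : 'I_n -> {mpoly k[n]}),
    u = iota s + \sum_(i < n) iota (c i) * j (alpha i).

Definition F0U (k : fieldType) (n : nat) (U : pzRingType)
  (iota : {rmorphism {mpoly k[n]} -> U}) (u : U) : Prop :=
  exists s : {mpoly k[n]}, u = iota s.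

(* X^1 = U (x) W^*, free U-module with basis xhat_1..xhat_n, represented by
   coefficient vectors 'I_n -> U; d^0 u = sum_k [u, x_k] xhat_k. *)
Definition d0 (k : fieldType) (n : nat) (U : pzRingType)
  (iota : {rmorphism {mpoly k[n]} -> U}) (u : U) : 'I_n -> U :=
  fun m => u * iota 'X_m - iota 'X_m * u.

(** The regular representation of (S, L) on S itself -- S acting by
    multiplication, L by derivations, inside the ring of additive
    endomorphisms of S -- is compatible with the Lie-Rinehart relations, so by
    universality it factors through U; evaluating at 1 shows that
    iota : S -> U is injective.  For u = s + sum_i c_i alpha_i in F_1U the
    relation [alpha, s] = alpha(s) gives [u, x_m] = sum_i c_i alpha_i(x_m), so
    d^0 u = 0 says that the row vector c lies in the left kernel of the matrix
    (alpha_i(x_m))_(i,m).  This matrix is upper triangular with determinant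
    prod_i alpha_i(x_i) != 0, hence c = 0 and u = s. *)

From HB Require Import structures.
From mathcomp Require Import all_boot all_order all_algebra.
From mathcomp Require Import multinomials.mpoly.
From mathcomp Require Import boolp.
Set Implicit Arguments. Unset Strict Implicit. Unset Printing Implicit Defensive.
Import GRing.Theory.
Local Open Scope ring_scope.

Record addEnd (V : zmodType) := AddEnd {
  addEnd_fun :> V -> V;
  addEnd_additive : {morph addEnd_fun : x y / x + y}
}.

Lemma addEnd_ext (V : zmodType) (f g : addEnd V) : f =1 g -> f = g.
Proof.
case: f g => f fD [g gD] /= /funext fg; subst g.
by rewrite (Prop_irrelevance fD gD).
Qed.

HB.instance Definition _ (V : zmodType) := gen_eqMixin (addEnd V).
HB.instance Definition _ (V : zmodType) := gen_choiceMixin (addEnd V).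

Section AdditiveEndomorphisms.
Variable V : zmodType.
Implicit Types f g h : addEnd V.

Definition addEnd0 : addEnd V := @AddEnd V (fun=> 0) (fun _ _ => esym (addr0 0)).

Definition addEnd_opp f : addEnd V :=
  @AddEnd V (fun x => - f x) (fun x y => ltac:(by rewrite /= addEnd_additive opprD)).

Definition addEnd_add f g : addEnd V :=
  @AddEnd V (fun x => f x + g x)
    (fun x y => ltac:(by rewrite /= !addEnd_additive addrACA)).

Definition addEnd1 : addEnd V := @AddEnd V id (fun _ _ => erefl).

Definition addEnd_comp f g : addEnd V :=
  @AddEnd V (fun x => f (g x)) (fun x y => ltac:(by rewrite /= !addEnd_additive)).

Lemma addEnd_addA : associative addEnd_add.
Proof. by move=> f g h; apply: addEnd_ext => x /=; rewrite addrA. Qed.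

Lemma addEnd_addC : commutative addEnd_add.
Proof. by move=> f g; apply: addEnd_ext => x /=; rewrite addrC. Qed.

Lemma addEnd_add0 : left_id addEnd0 addEnd_add.
Proof. by move=> f; apply: addEnd_ext => x /=; rewrite add0r. Qed.

Lemma addEnd_addN : left_inverse addEnd0 addEnd_opp addEnd_add.
Proof. by move=> f; apply: addEnd_ext => x /=; rewrite addNr. Qed.

HB.instance Definition _ :=
  GRing.isZmodule.Build (addEnd V) addEnd_addA addEnd_addC addEnd_add0 addEnd_addN.

Lemma addEnd_compA : associative addEnd_comp.
Proof. by move=> f g h; apply: addEnd_ext. Qed.

Lemma addEnd_comp1 : left_id addEnd1 addEnd_comp.
Proof. by move=> f; apply: addEnd_ext. Qed.

Lemma addEnd_compr1 : right_id addEnd1 addEnd_comp.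
Proof. by move=> f; apply: addEnd_ext. Qed.

Lemma addEnd_compDl : left_distributive addEnd_comp +%R.
Proof. by move=> f g h; apply: addEnd_ext. Qed.

Lemma addEnd_compDr : right_distributive addEnd_comp +%R.
Proof. by move=> f g h; apply: addEnd_ext => x /=; rewrite addEnd_additive. Qed.

HB.instance Definition _ := GRing.Zmodule_isPzRing.Build (addEnd V)
  addEnd_compA addEnd_comp1 addEnd_compr1 addEnd_compDl addEnd_compDr.

Lemma addEndD f g x : (f + g) x = f x + g x. Proof. by []. Qed.
Lemma addEndN f x : (- f) x = - f x. Proof. by []. Qed.
Lemma addEndM f g x : (f * g) x = f (g x). Proof. by []. Qed.

(* Maps that are not additive are sent to the junk value 0. *)
Definition addEnd_of (D : V -> V) : addEnd V :=
  if pselect {morph D : x y / x + y} is left DD then AddEnd DD else 0.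

Lemma addEnd_ofE (D : V -> V) : {morph D : x y / x + y} -> addEnd_of D =1 D.
Proof. by rewrite /addEnd_of; case: pselect. Qed.

End AdditiveEndomorphisms.

Section RegularRepresentation.
Variable R : comPzRingType.

Definition mulEnd (s : R) : addEnd R := @AddEnd R ( *%R s) (mulrDr s).

Lemma mulEnd_is_zmod_morphism : zmod_morphism mulEnd.
Proof. by move=> s t; apply: addEnd_ext => x /=; rewrite mulrBl. Qed.

Lemma mulEnd_is_monoid_morphism : monoid_morphism mulEnd.
Proof.
split=> [|s t]; apply: addEnd_ext => x /=; first by rewrite mul1r.
by rewrite mulrA.
Qed.

HB.instance Definition _ := GRing.isZmodMorphism.Build R (addEnd R) mulEnd
  mulEnd_is_zmod_morphism.
HB.instance Definition _ := GRing.isMonoidMorphism.Build R (addEnd R) mulEnd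
  mulEnd_is_monoid_morphism.

End RegularRepresentation.

Section LieRinehart.
Variables (k : fieldType) (n : nat) (alpha : 'I_n -> {mpoly k[n]} -> {mpoly k[n]}).
Local Notation S := {mpoly k[n]}.

Lemma inL_basis i : inL alpha (alpha i).
Proof.
exists (fun l => (l == i)%:R) => p.
rewrite (bigD1 i) //= eqxx mul1r big1 ?addr0 // => l /negbTE->.
by rewrite mul0r.
Qed.

Hypothesis alpha_der : forall i, isDer (alpha i).

Lemma inL_additive D : inL alpha D -> {morph D : x y / x + y}.
Proof.
case=> c Dc x y; rewrite !Dc -big_split; apply: eq_bigr => i _ /=.
by case: (alpha_der i) => -> _ _; rewrite mulrDr.
Qed.

Lemma inL_Leibniz D : inL alpha D -> forall x y, D (x * y) = x * D y + D x * y.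
Proof.
case=> c Dc x y; rewrite !Dc mulr_sumr mulr_suml -big_split.
apply: eq_bigr => i _ /=; case: (alpha_der i) => _ _ ->.
by rewrite mulrDr mulrCA [c i * (_ * y)]mulrA.
Qed.

Lemma regular_LR_compatible : LR_compatible alpha (@mulEnd S) (@addEnd_of S).
Proof.
split=> [D E /inL_additive DD /inL_additive ED | s D /inL_additive DD
        | D E /inL_additive DD /inL_additive ED | D s /[dup] LD /inL_additive DD];
  apply: addEnd_ext => x.
- rewrite addEndD !addEnd_ofE // => y z.
  by rewrite DD ED addrACA.
- rewrite addEndM !addEnd_ofE // => y z.
  by rewrite DD mulrDr.
- rewrite addEndD addEndN !addEndM !addEnd_ofE // => y z.
  by rewrite !(DD, ED) opprD addrACA.
- rewrite addEndD addEndN !addEndM !addEnd_ofE //=.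
  by rewrite inL_Leibniz // addrAC subrr add0r.
Qed.

Variables (U : pzRingType) (iota : {rmorphism S -> U}) (j : (S -> S) -> U).
Hypothesis envU : is_enveloping alpha iota j.

Lemma enveloping_inj : injective iota.
Proof.
have [f [f_iota _ _]] := envU.2 _ _ _ regular_LR_compatible.
apply: raddf_inj => t /(congr1 (fun u => f u 1)).
by rewrite f_iota rmorph0 /= mulr1.
Qed.

Lemma d0_F1U s (c : 'I_n -> S) :
  d0 iota (iota s + \sum_(i < n) iota (c i) * j (alpha i)) =1
  fun m => iota (\sum_(i < n) c i * alpha i 'X_m).
Proof.
have [[_ _ _ bracket] _] := envU.
move=> m; rewrite /d0 mulrDl mulrDr opprD addrACA -!rmorphM mulrC subrr add0r.
rewrite mulr_suml mulr_sumr -sumrB rmorph_sum; apply: eq_bigr => i _.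
rewrite rmorphM -bracket; last exact: inL_basis.
by rewrite mulrBr !mulrA -!rmorphM ['X_m * _]mulrC.
Qed.

End LieRinehart.

Lemma mulmx_eq0_det (R : idomainType) m n (v : 'M[R]_(m, n)) (A : 'M_n) :
  \det A != 0 -> (v *m A == 0) = (v == 0).
Proof.
move=> detA; apply/eqP/eqP => [vA0 | ->]; last exact: mul0mx.
have: \det A *: v = 0 by rewrite -mul_mx_scalar -mul_mx_adj mulmxA vA0 mul0mx.
by move/eqP; rewrite scalemx_eq0 (negbTE detA) => /eqP.
Qed.

Lemma det_upper_trig (R : comPzRingType) n (A : 'M[R]_n) :
  (forall i j : 'I_n, (j < i)%N -> A i j = 0) -> \det A = \prod_i A i i.
Proof.
move=> A_trig; rewrite -det_tr det_trig; first by apply: eq_bigr => i _; rewrite mxE.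
by apply/is_trig_mxP => i j ij; rewrite mxE A_trig.
Qed.

Lemma triangular_lincomb_eq0 (R : idomainType) n (a : 'I_n -> 'I_n -> R)
    (c : 'I_n -> R) :
  (forall i m : 'I_n, (m < i)%N -> a i m = 0) -> \prod_i a i i != 0 ->
  (forall m, \sum_i c i * a i m = 0) -> forall i, c i = 0.
Proof.
move=> a_trig a_diag ca0 i; pose A := \matrix_(l, m) a l m.
have detA : \det A != 0.
  rewrite det_upper_trig => [|l m ml]; last by rewrite mxE a_trig.
  by under eq_bigr do rewrite mxE.
have : \row_l c l *m A == 0.
  apply/eqP/rowP => m; rewrite !mxE -[RHS](ca0 m).
  by apply: eq_bigr => l _; rewrite !mxE.
by rewrite mulmx_eq0_det // => /eqP/rowP/(_ i); rewrite !mxE.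
Qed.

Theorem lemma3p1 (k : fieldType) (n : nat) (hk : [pchar k] =i pred0) (hn : (0 < n)%N)
  (alpha : 'I_n -> {mpoly k[n]} -> {mpoly k[n]})
  (htri : triangularizable alpha)
  (U : pzRingType) (iota : {rmorphism {mpoly k[n]} -> U})
  (j : ({mpoly k[n]} -> {mpoly k[n]}) -> U)
  (hU : is_enveloping alpha iota j) :
  forall u : U, (F1U alpha iota j u /\ d0 iota u = (fun _ => 0)) <-> F0U iota u.
Proof.
have [alpha_der _ _ alpha_trig alpha_diag] := htri.
move=> u; split=> [[[s [c ->]] d0u] | [s ->]].
  have c0 : forall i, c i = 0.
    apply: (triangular_lincomb_eq0 (a := fun i m => alpha i 'X_m)) => // m.
    apply: (enveloping_inj alpha_der hU); rewrite rmorph0.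
    by rewrite -(d0_F1U hU s c m) d0u.
  by exists s; rewrite big1 ?addr0 // => i _; rewrite c0 rmorph0 mul0r.
split; first by exists s, (fun=> 0); rewrite big1 ?addr0 // => i _; rewrite rmorph0 mul0r.
by apply: funext => m; rewrite /d0 -!rmorphM mulrC subrr.
Qed.
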